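(* Let $\gamma=(\gamma_1,\dots,\gamma_b)$ be a parallel map on $V=V_1\oplus\cdots\oplus V_b$, $V_i\cong(\mathbb F_2)^m$ with $m\ge4$, and $0\gamma=0$. Suppose every $\gamma_i$ is differentially $4$-uniform and satisfies $\hat n(\gamma_i)=0$. If $\gamma$ maps $\mathcal{LA}_U(W_1|W_2)$ onto a non-trivial partition $\mathcal{LA}_{U'}(W_1'|W_2')$, where $J_U\cap J_{U'}=\emptyset$, then $W_1,W_2,W_1',W_2'$ are walls and $W_1=W_1'=W_2=W_2'$; in particular both partitions are linear.
   Context: Let $b>1$, $n=mb$, $V=(\mathbb F_2)^n=V_1\oplus\cdots\oplus V_b$, $V_i\cong(\mathbb F_2)^m$. Permutations act on the right. A parallel map is $\gamma\in\mathrm{Sym}(V)$ with $(v_1\oplus\cdots\oplus v_b)\gamma=v_1\gamma_1\oplus\cdots\oplus v_b\gamma_b$, $\gamma_i\in\mathrm{Sym}(V_i)$. A wall is $\bigoplus_{i\in I}V_i$ with $\emptyset\ne I\subsetneq\{1,\dots,b\}$. For a subspace $U$ of dimension $n-1$, $J_U=\{j:V_j\cap U\subsetneq V_j\}$. For $f:(\mathbb F_2)^m\to(\mathbb F_2)^m$, $\hat f_a(x)=f(x+a)+f(x)$; $f$ is differentially $\delta$-uniform if $\delta=\max_{a\ne0,b}|\{x:\hat f_a(x)=b\}|$; $\hat n(f)=\max_{a\ne0}|\{v\ne0: x\mapsto\langle\hat f_a(x),v\rangle\text{ is constant}\}|$ with $\langle\cdot,\cdot\rangle$ the standard dot product. A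 permutation maps $\mathcal A$ onto $\mathcal B$ if it sends the blocks of $\mathcal A$ exactly onto those of $\mathcal B$; trivial partitions are the singleton partition and $\{V\}$. $\mathcal L(W)=\{W+v:v\in V\}$ (linear partition). For subspaces $W_1,W_2\subseteq U$, $\mathcal{LA}_U(W_1|W_2)=\{W_1+v:v\in U\}\cup\{(W_2+\bar v)+v:v\in U\}$ for any $\bar v\in V\setminus U$. *)

From HB Require Import structures.
From mathcomp Require Import all_boot all_order all_algebra all_fingroup all_field.
Set Implicit Arguments. Unset Strict Implicit. Unset Printing Implicit Defensive.
Import GRing.Theory.
Local Open Scope ring_scope.

Notation blk m := ('rV['F_2]_m) (only parsing).
Notation Vsp b m := {ffun 'I_b -> 'rV['F_2]_m} (only parsing).

Definition parmap (b m : nat) (g : 'I_b -> {perm 'rV['F_2]_m}) (x : Vsp b m) : Vsp b m :=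
  [ffun i => g i (x i)].

Definition dotp (m : nat) (u v : 'rV['F_2]_m) : 'F_2 := \sum_(i < m) u 0 i * v 0 i.

Definition fder (m : nat) (f : 'rV['F_2]_m -> 'rV['F_2]_m) (a x : 'rV['F_2]_m) :=
  f (x + a) + f x.

Definition diff_unif (m : nat) (f : 'rV['F_2]_m -> 'rV['F_2]_m) : nat :=
  (\max_(a : 'rV['F_2]_m | a != 0%R) \max_(c : 'rV['F_2]_m)
     #|[set x : 'rV['F_2]_m | fder f a x == c]|)%N.

Definition diff_delta_uniform (m : nat) (f : 'rV['F_2]_m -> 'rV['F_2]_m) (delta : nat) :=
  diff_unif f = delta.

Definition nhat (m : nat) (f : 'rV['F_2]_m -> 'rV['F_2]_m) : nat :=
  (\max_(a : 'rV['F_2]_m | a != 0%R)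
     #|[set v : 'rV['F_2]_m | (v != 0%R) &&
         [forall x, forall y, dotp (fder f a x) v == dotp (fder f a y) v]]|)%N.

Definition inj_blk (b m : nat) (j : 'I_b) (v : 'rV['F_2]_m) : Vsp b m :=
  [ffun i => if i == j then v else 0].

Definition Jset (b m : nat) (U : {vspace Vsp b m}) : {set 'I_b} :=
  [set j | [exists v : 'rV['F_2]_m, inj_blk j v \notin U]].

Definition wall_set (b m : nat) (I : {set 'I_b}) : {set Vsp b m} :=
  [set x : Vsp b m | [forall i, (i \notin I) ==> (x i == 0%R)]].

Definition is_wall (b m : nat) (W : {vspace Vsp b m}) : Prop :=
  exists I : {set 'I_b}, [/\ I != set0, I != setT &
     [set x : Vsp b m | x \in W] = wall_set m I].

Definition coset (b m : nat) (W : {vspace Vsp b m}) (v : Vsp b m) : {set Vsp b m} :=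
  [set (w : Vsp b m) + v | w in [set x : Vsp b m | x \in W]].

Definition linpart (b m : nat) (W : {vspace Vsp b m}) : {set {set Vsp b m}} :=
  [set coset W v | v : Vsp b m].

(* LA_U(W1|W2), given vbar in V \ U *)
Definition LApart (b m : nat) (U W1 W2 : {vspace Vsp b m}) (vbar : Vsp b m)
  : {set {set Vsp b m}} :=
  [set coset W1 v | v in [set x : Vsp b m | x \in U]] :|:
  [set coset W2 (vbar + v) | v in [set x : Vsp b m | x \in U]].

Definition maps_onto (T : finType) (f : T -> T) (A B : {set {set T}}) : Prop :=
  [set f @: (X : {set T}) | X in A] = B.

Definition trivial_part (T : finType) (A : {set {set T}}) : Prop :=
  A = [set [set x] | x : T] \/ A = [set [set: T]].

(* The parallel map γ sends the block c + W_c of LA_U(W1|W2), where W_c is W1 or W2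
   according as c ∈ U or not, onto the block γ(c) + W'_γ(c); so γ(x + a) + γ(x) ∈ W'_γ(x)
   whenever a ∈ W_x.  Translating x inside a block V_i ⊆ U does not change W_x, hence the
   derivatives of γ_i in direction a_i are constant modulo the slice of W1' + W2' at i, and
   n̂(γ_i) = 0 forces this slice to be all of V_i when a_i ≠ 0.  For i ∈ J_U' this
   contradicts V_i ⊄ U', so W1 and W2 vanish on these blocks; comparing the blocks through
   0 and through a point of U ∩ V_i mapped outside U' then gives W1' = W2'.
   For i ∈ J_U, |U ∩ V_i| = 2^(m-1) ≥ 8 and 4-uniformity first make the slice Z of W1' at i
   nonzero, then give |Z|^2 ≤ |U ∩ V_i| ≤ 4(|Z| - 1) unless W1 ∩ W2 meets V_i; but a nonzero
   direction in W1 ∩ W2 ∩ V_i has all its γ_i-derivatives in the proper subspace Z,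
   contradicting n̂(γ_i) = 0 again.  So W1 and W2 only meet blocks outside J_U, which they
   (and W1') contain entirely: all four spaces are the wall spanned by these blocks. *)

From Pilot Require Import Defs.
From HB Require Import structures.
From mathcomp Require Import all_boot all_order all_algebra all_fingroup all_field.
From mathcomp Require Import zify.
(* Re-imported so that [coset] is Defs.coset, not the quotient-group coset of fingroup. *)
Import Defs.
Import GRing.Theory.
Local Open Scope ring_scope.

Set Implicit Arguments.
Unset Strict Implicit.
Unset Printing Implicit Defensive.

Section Char2.
Variable V : lmodType 'F_2.
Implicit Types x y : V.

Lemma addrr_F2 x : x + x = 0.
Proof.
have two0 : (1 + 1 : 'F_2) = 0 by apply/val_inj.
by rewrite -{1 2}[x]scale1r -scalerDl two0 scale0r.
Qed.

Lemma addKr_F2 x y : x + (x + y) = y.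
Proof. by rewrite addrA addrr_F2 add0r. Qed.

Lemma addrK_F2 x y : y + x + x = y.
Proof. by rewrite -addrA addrr_F2 addr0. Qed.

Lemma oppr_F2 x : - x = x.
Proof. by apply/eqP; rewrite eq_sym -addr_eq0 addrr_F2. Qed.

Lemma addr_eq0_F2 x y : (x + y == 0) = (x == y).
Proof. by rewrite addr_eq0 oppr_F2. Qed.

End Char2.

Section Hyperplane.
Variable vT : vectType 'F_2.

Lemma hyperplane_addr_notin (U : {vspace vT}) x y :
  \dim U = (\dim {:vT}).-1 -> x \notin U -> y \notin U -> x + y \in U.
Proof.
move=> dimU xU yU.
have Ux_full : (U + <[x]> = fullv)%VS.
  apply/eqP; rewrite eqEdim subvf /=.
  have : (\dim U < \dim (U + <[x]>))%N.
    rewrite (ltn_leqif (dimv_leqif_sup (addvSl U <[x]>))).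
    by apply: contra xU => /subvP; apply; apply: subvP (addvSr U _) _ (memv_line x).
  by rewrite dimU; case: (\dim {:vT}).
have /memv_addP [u uU [_ /vlineP [k ->] yE]] : y \in (U + <[x]>)%VS.
  by rewrite Ux_full memvf.
have [k0|k1] : k = 0 \/ k = 1 by case: k {yE} => [[|[|]]] //= ?; [left|right]; apply/val_inj.
  by case/negP: yU; rewrite yE k0 scale0r addr0.
by rewrite yE k1 scale1r addrCA addrr_F2 addr0.
Qed.

Lemma hyperplane_memD (U : {vspace vT}) x y :
  \dim U = (\dim {:vT}).-1 -> (x + y \in U) = ((x \in U) == (y \in U)).
Proof.
move=> dimU; case xU: (x \in U); case yU: (y \in U) => /=.
- by rewrite memvD.
- by apply: contraFF yU => xyU; rewrite -(addKr_F2 x y) memvD.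
- by apply: contraFF xU => xyU; rewrite -(addrK_F2 y x) memvD.
- by rewrite hyperplane_addr_notin ?xU ?yU.
Qed.

Lemma dimv_index2 (H : {vspace vT}) e :
  (forall y, y \notin H -> y + e \in H) -> (\dim {:vT} <= (\dim H).+1)%N.
Proof.
move=> He.
have : (fullv <= H + <[e]>)%VS.
  apply/subvP => y _; case yH: (y \in H); first exact: subvP (addvSl H _) _ yH.
  by rewrite -(addrK_F2 e y) memv_add ?memv_line ?He ?yH.
move/dimvS/leq_trans; apply; apply: leq_trans (dimv_add_leqif H <[e]>).1 _.
by rewrite dim_vline -[(\dim H).+1]addn1 leq_add2l leq_b1.
Qed.

End Hyperplane.

Lemma card_addv_disjoint (F : finFieldType) m (M1 M2 : {vspace 'rV[F]_m}) :
  (M1 :&: M2 = 0)%VS -> #|(M1 + M2)%VS| = (#|M1| * #|M2|)%N.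
Proof. by move=> dxM; rewrite !card_vspace dimv_disjoint_sum // expnD. Qed.

Lemma dimv_full_rV (K : fieldType) m : \dim (fullv : {vspace 'rV[K]_m}) = m.
Proof. by rewrite dimvf /dim /= mul1n. Qed.

Lemma exists_orthogonal (K : fieldType) m (Z : {vspace 'rV[K]_m}) :
  Z != fullv -> exists2 v : 'rV[K]_m, v != 0 & forall z, z \in Z -> z *m v^T = 0.
Proof.
move=> Zfull.
pose B : 'M[K]_(\dim Z, m) := \matrix_k (vbasis Z)`_k.
have rankB : (\rank B < m)%N.
  apply: leq_ltn_trans (rank_leq_row B) _.
  have := dimvS (subvf Z); rewrite dimv_full_rV leq_eqVlt => /orP[/eqP dZ|//].
  by move: Zfull; rewrite eqEdim subvf dZ dimv_full_rV leqnn.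
have [k vk] : exists k, row k (kermx B^T) != 0.
  apply/existsP; apply: contraTT rankB; rewrite negb_exists => /forallP rows0.
  rewrite -leqNgt -(mxrank_tr B) -subn_eq0 -mxrank_ker mxrank_eq0.
  by apply/eqP/row_matrixP => k; rewrite row0; exact/eqP/negPn.
set v := row k _ in vk; exists v => // z /coord_vbasis ->.
have vB : B *m v^T = 0 by rewrite -[B]trmxK -trmx_mul -row_mul mulmx_ker row0 trmx0.
rewrite mulmx_suml big1 // => j _; rewrite -scalemxAl.
by have := congr1 (row j) vB; rewrite row_mul rowK row0 => ->; rewrite scaler0.
Qed.

Lemma dotpE m (u v : 'rV['F_2]_m) : dotp u v = (u *m v^T) 0 0.
Proof. by rewrite /dotp mxE; apply: eq_bigr => k _; rewrite mxE. Qed.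

Lemma nhat_gt0 m (F : 'rV['F_2]_m -> 'rV['F_2]_m) (Z : {vspace 'rV['F_2]_m}) a t0 :
  Z != fullv -> a != 0 -> (forall t, fder F a t + fder F a t0 \in Z) -> (0 < nhat F)%N.
Proof.
move=> Zfull a0 hZ; have [v v0 vZ] := exists_orthogonal Zfull.
have dotp_const t : dotp (fder F a t) v = dotp (fder F a t0) v.
  have /eqP := vZ _ (hZ t); rewrite mulmxDl addr_eq0_F2 => /eqP.
  by rewrite !dotpE => ->.
apply: leq_trans (leq_bigmax_cond (P := fun a => a != 0) _ a0).
rewrite card_gt0; apply/set0Pn; exists v; rewrite inE v0.
by apply/forallP => x; apply/forallP => y; rewrite !dotp_const.
Qed.

Lemma card_fder_fiber m (F : 'rV['F_2]_m -> 'rV['F_2]_m) a c :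
  a != 0 -> (#|[set x | fder F a x == c]| <= diff_unif F)%N.
Proof.
move=> a0; apply: leq_trans (leq_bigmax_cond (P := fun a => a != 0) _ a0).
exact: (leq_bigmax_cond (F := fun c => #|[set x | fder F a x == c]|)).
Qed.

Lemma card_le_mul_fibers (T T' : finType) (A : {pred T}) (B : {pred T'}) (f : T -> T') k :
  {in A, forall x, f x \in B} -> (forall y, #|[set x in A | f x == y]| <= k)%N ->
  (#|A| <= #|B| * k)%N.
Proof.
move=> fAB fib; rewrite -sum1_card (partition_big f B) //= -sum_nat_const.
by apply: leq_sum => y _; rewrite sum1dep_card.
Qed.

Section Blocks.
Variables b m : nat.
Local Notation V := (Vsp b m).
Local Notation blk := (@inj_blk b m).
Implicit Types (W : {vspace V}) (x y a : V).

Lemma inj_blk_is_linear j : linear (blk j).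
Proof.
by move=> k u v; apply/ffunP => i; rewrite !ffunE; case: eqP => // _; rewrite scaler0 addr0.
Qed.
HB.instance Definition _ j := GRing.isLinear.Build 'F_2 _ _ _ (blk j) (inj_blk_is_linear j).

Lemma sum_inj_blk x : \sum_j blk j (x j) = x.
Proof.
apply/ffunP => k; rewrite sum_ffunE (bigD1 k) //= big1 ?addr0 ?ffunE ?eqxx //.
by move=> j jk; rewrite ffunE eq_sym (negbTE jk).
Qed.

Lemma dimv_Vsp : \dim (fullv : {vspace V}) = (m * b)%N.
Proof. by rewrite dimvf /dim /= card_ord dim_matrix mul1r mulnC. Qed.

Definition slice W j : {vspace 'rV['F_2]_m} := (linfun (blk j) @^-1: W)%VS.

Lemma mem_slice W j t : (t \in slice W j) = (blk j t \in W).
Proof. by rewrite /slice -memv_preim lfunE. Qed.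

Lemma JsetP W j : reflect (exists t, blk j t \notin W) (j \in Jset W).
Proof. by rewrite inE; apply: existsP. Qed.

Lemma inj_blk_notin_Jset W j t : j \notin Jset W -> blk j t \in W.
Proof. by move=> jJ; apply: contraR jJ => tW; apply/JsetP; exists t. Qed.

Lemma Jset_neq0 W x : x \notin W -> Jset W != set0.
Proof.
move=> xW; apply: contraNneq xW => J0; rewrite -(sum_inj_blk x); apply: memv_suml => j _.
by apply: inj_blk_notin_Jset; rewrite J0 inE.
Qed.

Lemma wall_set_subv W (I : {set 'I_b}) x :
  (forall i t, i \in I -> blk i t \in W) -> x \in wall_set m I -> x \in W.
Proof.
move=> IW; rewrite inE => /forallP xI; rewrite -(sum_inj_blk x); apply: memv_suml => i _.
case: (boolP (i \in I)) => [/IW// | iI].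
by have /implyP/(_ iI)/eqP-> := xI i; rewrite linear0 mem0v.
Qed.

Definition blk_support W : {set 'I_b} := [set i | [exists a, (a \in W) && (a i != 0)]].

Lemma mem_wall_support W :
  (forall i t, i \in blk_support W -> blk i t \in W) ->
  forall x, (x \in W) = (x \in wall_set m (blk_support W)).
Proof.
move=> IW x; apply/idP/idP => [xW|]; last exact: wall_set_subv.
rewrite inE; apply/forallP => i; apply/implyP => iI; apply: contraNT iI => xi.
by rewrite inE; apply/existsP; exists x; rewrite xW.
Qed.

Lemma wall_set0 x : (x \in wall_set m set0) = (x == 0).
Proof.
rewrite inE; apply/forallP/eqP => [x0 | -> i]; last by rewrite ffunE eqxx implybT.
by apply/ffunP => i; have := x0 i; rewrite inE ffunE => /eqP.
Qed.

Section ParallelMap.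
Variable g : 'I_b -> {perm 'rV['F_2]_m}.
Hypothesis g0 : parmap g 0 = 0.
Local Notation gam := (parmap g).
Local Notation gamV := (parmap (fun i => (g i)^-1%g)).

Lemma perm_blk0 i : g i 0 = 0.
Proof. by have := congr1 (fun x : V => x i) g0; rewrite /= !ffunE. Qed.

Lemma permV_blk0 i : (g i)^-1%g 0 = 0.
Proof. by rewrite -{1}(perm_blk0 i) permK. Qed.

Lemma parmapK : cancel gam gamV.
Proof. by move=> x; apply/ffunP => k; rewrite !ffunE permK. Qed.

Lemma parmapVK : cancel gamV gam.
Proof. by move=> x; apply/ffunP => k; rewrite !ffunE permKV. Qed.

Lemma parmap_blk j t : gam (blk j t) = blk j (g j t).
Proof. by apply/ffunP => k; rewrite !ffunE; case: eqP => [->|_]; rewrite ?perm_blk0. Qed.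

Lemma parmapV_blk j t : gamV (blk j t) = blk j ((g j)^-1%g t).
Proof. by apply/ffunP => k; rewrite !ffunE; case: eqP => [->|_]; rewrite ?permV_blk0. Qed.

Lemma parmap_wall_set I x : (gam x \in wall_set m I) = (x \in wall_set m I).
Proof.
rewrite !inE; apply: eq_forallb => i.
by rewrite ffunE -{1}(perm_blk0 i) (inj_eq perm_inj).
Qed.

Lemma parmapD_blk j s a : a j = 0 -> gam (blk j s + a) = gam (blk j s) + gam a.
Proof.
move=> aj; apply/ffunP => k; rewrite !ffunE; case: eqP => [->|_].
  by rewrite aj !addr0 perm_blk0 addr0.
by rewrite !add0r perm_blk0 add0r.
Qed.

Lemma parmap_blk_fder i t c :
  gam (blk i t + blk i c) + gam (blk i t) = blk i (fder (g i) c t).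
Proof. by rewrite -linearD !parmap_blk -linearD. Qed.

Lemma parmap_fder_shift x a i s :
  gam (x + blk i s + a) + gam (x + blk i s) =
  gam (x + a) + gam x + blk i (fder (g i) (a i) (x i + s) + fder (g i) (a i) (x i)).
Proof.
apply/ffunP => k; rewrite !ffunE /fder; case: eqP => [->|_].
  by rewrite [RHS]addrCA addrr_F2 addr0.
by rewrite !addr0.
Qed.

End ParallelMap.

Lemma mem_coset W c y : (y \in coset W c) = (y + c \in W).
Proof.
apply/imsetP/idP => [[w] | yc]; first by rewrite inE => wW ->; rewrite addrK_F2.
by exists (y + c); rewrite ?inE // addrK_F2.
Qed.

Lemma coset_id W c y : y \in coset W c -> coset W y = coset W c.
Proof.
rewrite mem_coset => yc; apply/setP => z; rewrite !mem_coset.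
have -> : z + c = (z + y) + (y + c) by rewrite addrA addrK_F2.
by apply/idP/idP => [zy | /memvD-/(_ _ yc)]; [rewrite memvD | rewrite addrK_F2].
Qed.

Definition LAspace (U W1 W2 : {vspace V}) x : {vspace V} := if x \in U then W1 else W2.

Section LApartition.
Variables (U W1 W2 : {vspace V}) (vbar : V).
Hypotheses (dimU : \dim U = (m * b).-1) (W1U : (W1 <= U)%VS) (W2U : (W2 <= U)%VS).
Hypothesis vbarU : vbar \notin U.
Local Notation LAsp := (LAspace U W1 W2).

Lemma hyperplaneD x y : (x + y \in U) = ((x \in U) == (y \in U)).
Proof. by apply: hyperplane_memD; rewrite dimv_Vsp. Qed.

Lemma LAspace_sub x : (LAsp x <= U)%VS.
Proof. by rewrite /LAspace; case: ifP. Qed.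

Lemma LAspaceDr x a : a \in U -> LAsp (x + a) = LAsp x.
Proof. by move=> aU; rewrite /LAspace hyperplaneD aU eqb_id. Qed.

Lemma LApartP X : reflect (exists c, X = coset (LAsp c) c) (X \in LApart U W1 W2 vbar).
Proof.
apply: (iffP setUP) => [|[c ->]].
  case=> /imsetP [v]; rewrite inE => vU ->; [exists v | exists (vbar + v)].
    by rewrite /LAspace vU.
  by rewrite /LAspace hyperplaneD vU (negbTE vbarU).
case cU: (c \in U); [left | right]; apply/imsetP.
  by exists c; rewrite ?inE // /LAspace cU.
exists (vbar + c); last by rewrite addKr_F2 /LAspace cU.
by rewrite inE hyperplaneD cU (negbTE vbarU).
Qed.

Lemma LApart_coset X y : X \in LApart U W1 W2 vbar -> y \in X -> X = coset (LAsp y) y.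
Proof.
case/LApartP => c -> yc.
have ycU : y + c \in U by move: yc; rewrite mem_coset => /(subvP (LAspace_sub c)).
have -> : LAsp y = LAsp c by rewrite -(LAspaceDr c ycU) addrC addrK_F2.
by rewrite (coset_id yc).
Qed.

Lemma LApart_linpart : W1 = W2 -> LApart U W1 W2 vbar = linpart W1.
Proof.
move=> W12; apply/setP => X; apply/LApartP/imsetP => [[c ->] | [c _ ->]];
  by exists c => //; rewrite /LAspace -W12; case: ifP.
Qed.

Lemma LApart_trivial : W1 = 0%VS -> W2 = 0%VS -> trivial_part (LApart U W1 W2 vbar).
Proof.
move=> W10 W20; have coset1 c : coset (LAsp c) c = [set c].
  apply/setP => y; rewrite mem_coset /LAspace in_set1.
  by case: ifP => _; rewrite ?W10 ?W20 memv0 addr_eq0_F2.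
left; apply/setP => X; apply/LApartP/imsetP => [[c ->] | [c _ ->]];
  by exists c => //; rewrite coset1.
Qed.

End LApartition.
End Blocks.

Section ParallelLA.
Variables (b m : nat) (g : 'I_b -> {perm 'rV['F_2]_m}).
Variables (U W1 W2 U' W1' W2' : {vspace Vsp b m}) (vbar vbar' : Vsp b m).
Hypotheses (m_ge4 : (4 <= m)%N) (g0 : parmap g 0 = 0).
Hypotheses (g_du : forall i, diff_delta_uniform (g i) 4) (g_nhat : forall i, nhat (g i) = 0%N).
Hypotheses (dimU : \dim U = (m * b).-1) (W1U : (W1 <= U)%VS) (W2U : (W2 <= U)%VS).
Hypothesis vbarU : vbar \notin U.
Hypotheses (dimU' : \dim U' = (m * b).-1) (W1U' : (W1' <= U')%VS) (W2U' : (W2' <= U')%VS).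
Hypothesis vbarU' : vbar' \notin U'.
Hypothesis JUU' : Jset U :&: Jset U' = set0.
Hypothesis g_LA : maps_onto (parmap g) (LApart U W1 W2 vbar) (LApart U' W1' W2' vbar').

Local Notation V := (Vsp b m).
Local Notation blk := (@inj_blk b m).
Local Notation gam := (parmap g).
Local Notation gamV := (parmap (fun i => (g i)^-1%g)).
Local Notation LAsp := (LAspace U W1 W2).
Local Notation LAsp' := (LAspace U' W1' W2').
Implicit Types (x y a : V).

Lemma notin_JsetU i : i \in Jset U' -> i \notin Jset U.
Proof.
move=> iJ'; apply/negP => iJ; suff : i \in set0 by rewrite inE.
by rewrite -JUU' inE iJ.
Qed.

Lemma parmap_LAcoset x : gam @: coset (LAsp x) x = coset (LAsp' (gam x)) (gam x).
Proof.
have xA : coset (LAsp x) x \in LApart U W1 W2 vbar.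
  by apply/(LApartP W1 W2 dimU vbarU); exists x.
have xX : x \in coset (LAsp x) x by rewrite mem_coset addrr_F2 mem0v.
apply: (LApart_coset dimU' W1U' W2U' vbarU'); last exact: imset_f xX.
by rewrite -g_LA; apply: imset_f.
Qed.

Lemma parmap_addr_LAspace x a : a \in LAsp x -> gam (x + a) + gam x \in LAsp' (gam x).
Proof.
move=> aW; rewrite -mem_coset -parmap_LAcoset; apply: imset_f.
by rewrite mem_coset addrAC addrr_F2 add0r.
Qed.

Lemma parmapV_addr_LAspace x a' :
  a' \in LAsp' (gam x) -> gamV (gam x + a') + x \in LAsp x.
Proof.
move=> aW; have : gam x + a' \in coset (LAsp' (gam x)) (gam x).
  by rewrite mem_coset addrAC addrr_F2 add0r.
by rewrite -parmap_LAcoset => /imsetP [z zX ->]; rewrite parmapK -mem_coset.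
Qed.

Lemma parmap_W1 a : a \in W1 -> gam a \in W1'.
Proof.
have LA0 : LAsp 0 = W1 by rewrite /LAspace mem0v.
by rewrite -LA0 => /parmap_addr_LAspace; rewrite g0 add0r addr0 /LAspace mem0v.
Qed.

Lemma parmapV_W1' a' : a' \in W1' -> gamV a' \in W1.
Proof.
have LA0 : LAsp' (gam 0) = W1' by rewrite g0 /LAspace mem0v.
by rewrite -LA0 => /parmapV_addr_LAspace; rewrite g0 add0r addr0 /LAspace mem0v.
Qed.

Lemma fder_shift_mem x a i s : a \in LAsp x -> blk i s \in U ->
  blk i (fder (g i) (a i) (x i + s) + fder (g i) (a i) (x i)) \in (W1' + W2')%VS.
Proof.
move=> aW sU; have aWs : a \in LAsp (x + blk i s) by rewrite LAspaceDr.
have LA'_sub y : (LAsp' y <= W1' + W2')%VS.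
  by rewrite /LAspace; case: ifP => _; [apply: addvSl | apply: addvSr].
have e1 := subvP (LA'_sub _) _ (parmap_addr_LAspace aW).
have e2 := subvP (LA'_sub _) _ (parmap_addr_LAspace aWs).
by move: (memvD e1 e2); rewrite parmap_fder_shift addKr_F2.
Qed.

Lemma slice_W1'_W2'_full x a i : i \notin Jset U -> a \in LAsp x -> a i != 0 ->
  slice (W1' + W2') i = fullv.
Proof.
move=> iJ aW ai0; apply/eqP; apply: contraT => Zfull.
suff : (0 < nhat (g i))%N by rewrite g_nhat.
apply: (nhat_gt0 (t0 := x i) Zfull ai0) => t.
rewrite -[t](addKr_F2 (x i)) mem_slice.
by apply: fder_shift_mem; rewrite ?inj_blk_notin_Jset.
Qed.

Lemma blk_eq0_JsetU' x a i : i \in Jset U' -> a \in LAsp x -> a i = 0.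
Proof.
move=> iJ' aW; apply/eqP; apply: contraT => ai0.
have /JsetP [t tU'] := iJ'.
have := memvf t; rewrite -(slice_W1'_W2'_full (notin_JsetU iJ') aW ai0) mem_slice => tW.
by move: tU'; rewrite (subvP _ _ tW) // subv_add W1U' W2U'.
Qed.

Lemma W1'_eq_W2' : W1' = W2'.
Proof.
have /set0Pn [j jJ'] := Jset_neq0 vbarU'; have /JsetP [t tU'] := jJ'.
pose x0 := blk j ((g j)^-1%g t).
have LAx0 : LAsp x0 = W1 by rewrite /LAspace inj_blk_notin_Jset ?notin_JsetU.
have LAgx0 : LAsp' (gam x0) = W2' by rewrite /LAspace parmap_blk // permKV (negbTE tU').
have gamD a : a \in W1 -> gam (x0 + a) + gam x0 = gam a.
  move=> aW; have aj0 : a j = 0 by apply: (blk_eq0_JsetU' (x := 0) jJ'); rewrite /LAspace mem0v.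
  by rewrite parmapD_blk // addrAC addrr_F2 add0r.
apply/vspaceP => a'; apply/idP/idP => a'W.
  have aW := parmapV_W1' a'W; move: (parmap_addr_LAspace (x := x0) (a := gamV a')).
  by rewrite LAx0 LAgx0 gamD // parmapVK; apply.
move: (parmapV_addr_LAspace (x := x0) (a' := a')); rewrite LAx0 LAgx0 => /(_ a'W) aW.
rewrite -[a'](_ : gam (gamV (gam x0 + a') + x0) = a'); first exact: parmap_W1.
by rewrite -gamD // [x0 + _]addrC addrK_F2 parmapVK addrAC addrr_F2 add0r.
Qed.

Lemma LAspace'E y : LAsp' y = W1'.
Proof. by rewrite /LAspace -W1'_eq_W2'; case: ifP. Qed.

Lemma addv_W1'_W2' : (W1' + W2' = W1')%VS.
Proof. by rewrite -W1'_eq_W2' addvv. Qed.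

Section SliceCounting.
Variable i : 'I_b.
Hypothesis iJ : i \in Jset U.
Local Notation H := (slice U i).
Local Notation Z := (slice W1' i).
Local Notation M1 := (slice W1 i).
Local Notation M2 := (slice W2 i).

Lemma card_slice_U : (8 <= #|H|)%N.
Proof.
have /JsetP [e eU] := iJ.
have : (m <= (\dim H).+1)%N.
  rewrite -{1}(dimv_full_rV 'F_2 m); apply: (dimv_index2 (e := e)) => y.
  by rewrite !mem_slice linearD (hyperplaneD dimU) => /negbTE-> ; rewrite (negbTE eU).
rewrite card_vspace card_Fp // -[8%N]/(2 ^ 3)%N leq_exp2l // -ltnS; exact: leq_trans m_ge4.
Qed.

Lemma slice_W1'_neq0 x a : a \in LAsp x -> a i != 0 -> Z != 0%VS.
Proof.
move=> aW ai0; apply/negP => /eqP Z0.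
have fiber : (#|H| <= #|[set t | fder (g i) (a i) t == fder (g i) (a i) (x i)]|)%N.
  rewrite -[#|H|](card_imset _ (addrI (x i))).
  apply/subset_leq_card/subsetP => _ /imsetP [s sH ->].
  rewrite inE -addr_eq0_F2 -memv0 -Z0 mem_slice -addv_W1'_W2'.
  by apply: fder_shift_mem; rewrite -?mem_slice.
have := leq_trans card_slice_U (leq_trans fiber (card_fder_fiber _ _ ai0)).
by rewrite g_du.
Qed.

Lemma card_slice_U_le : Z != 0%VS -> (#|H| <= (#|Z|).-1 * 4)%N.
Proof.
move=> Z0; have z0Z : vpick Z \in Z := memv_pick Z.
have z0n : vpick Z != 0 by rewrite vpick0.
pose c0 := (g i)^-1%g (vpick Z).
have c0W1 : blk i c0 \in W1 by rewrite -parmapV_blk //; apply: parmapV_W1'; rewrite -mem_slice.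
have c0n : c0 != 0.
  by apply: contraNneq z0n => c00; rewrite -(permKV (g i) (vpick Z)) -/c0 c00 perm_blk0.
rewrite [#|Z|](cardD1 0) mem0v add1n /=.
apply: (card_le_mul_fibers (f := fder (g i) c0)) => [t tH | z].
  rewrite !inE /fder addr_eq0_F2 (inj_eq perm_inj) -{2}[t]addr0 (inj_eq (addrI t)) c0n /=.
  rewrite mem_slice -parmap_blk_fder // -(LAspace'E (gam (blk i t))).
  by apply: parmap_addr_LAspace; rewrite /LAspace -[_ \in U]mem_slice tH.
rewrite -(g_du i); apply: leq_trans (card_fder_fiber _ z c0n).
by apply/subset_leq_card/subsetP => t; rewrite !inE => /andP [].
Qed.

Lemma card_slice_W1'_le_W1 : (#|Z| <= #|M1|)%N.
Proof.
rewrite -[#|Z|](card_imset _ (@perm_inj _ ((g i)^-1%g))).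
apply/subset_leq_card/subsetP => _ /imsetP [z zZ ->].
by rewrite mem_slice -parmapV_blk //; apply: parmapV_W1'; rewrite -mem_slice.
Qed.

Lemma card_slice_W1'_le_W2 : (#|Z| <= #|M2|)%N.
Proof.
have /JsetP [e eU] := iJ.
pose f z := (g i)^-1%g (g i e + z) + e.
have f_inj : injective f by move=> z1 z2 /addIr /perm_inj /addrI.
rewrite -[#|Z|](card_imset _ f_inj); apply/subset_leq_card/subsetP => _ /imsetP [z zZ ->].
have -> : f z \in M2 = (gamV (gam (blk i e) + blk i z) + blk i e \in W2).
  by rewrite mem_slice parmap_blk // -linearD parmapV_blk // -linearD.
have := parmapV_addr_LAspace (x := blk i e) (a' := blk i z).
by rewrite LAspace'E /LAspace (negbTE eU); apply; rewrite -mem_slice.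
Qed.

Lemma slice_W1_W2_neq0 : Z != 0%VS -> (M1 :&: M2)%VS != 0%VS.
Proof.
move=> Z0; apply/negP => /eqP M0.
have M12H : (#|M1| * #|M2| <= #|H|)%N.
  rewrite -card_addv_disjoint //; apply/subset_leq_card/subsetP; apply/subvP.
  by rewrite subv_add; apply/andP; split; apply/subvP => t; rewrite !mem_slice; apply/subvP.
have ZZH := leq_trans (leq_mul card_slice_W1'_le_W1 card_slice_W1'_le_W2) M12H.
(* #|Z| ^ 2 <= #|H| <= 4 (#|Z| - 1) forces #|Z| = 2, hence #|H| <= 4 < 8. *)
have := card_slice_U_le Z0; have := card_slice_U.
by case: #|Z| ZZH => [|k] /=; nia.
Qed.

Lemma slice_W1_W2_eq0 : (M1 :&: M2 = 0)%VS.
Proof.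
apply/eqP; apply: contraT => M0; have /JsetP [e eU] := iJ.
have : vpick (M1 :&: M2) \in (M1 :&: M2)%VS := memv_pick _.
set c := vpick _; rewrite memv_cap !mem_slice => /andP [cW1 cW2].
have c0 : c != 0 by rewrite vpick0.
have Zfull : Z != fullv.
  apply: contraNneq eU => Zf; have : g i e \in Z by rewrite Zf memvf.
  by rewrite mem_slice => /parmapV_W1'; rewrite parmapV_blk // permK; apply/subvP.
have fderZ t : fder (g i) c t \in Z.
  rewrite mem_slice -parmap_blk_fder // -(LAspace'E (gam (blk i t))).
  by apply: parmap_addr_LAspace; rewrite /LAspace; case: ifP.
suff : (0 < nhat (g i))%N by rewrite g_nhat.
by apply: (nhat_gt0 (t0 := 0) Zfull c0) => t; rewrite memvD.
Qed.

End SliceCounting.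

Lemma blk_eq0_JsetU x a i : i \in Jset U -> a \in LAsp x -> a i = 0.
Proof.
move=> iJ aW; apply/eqP; apply: contraT => ai0.
have := slice_W1_W2_neq0 iJ (slice_W1'_neq0 iJ aW ai0).
by rewrite slice_W1_W2_eq0 ?eqxx.
Qed.

Section FullBlocks.
Variables (x a : V) (i : 'I_b).
Hypotheses (aW : a \in LAsp x) (ai0 : a i != 0).

Lemma blk_W1' t : blk i t \in W1'.
Proof.
have iJ : i \notin Jset U by apply/negP => iJ; move: ai0; rewrite (blk_eq0_JsetU iJ aW) eqxx.
by have := memvf t; rewrite -(slice_W1'_W2'_full iJ aW ai0) mem_slice addv_W1'_W2'.
Qed.

Lemma blk_W1 t : blk i t \in W1.
Proof. by rewrite -[t](permK (g i)) -parmapV_blk //; apply/parmapV_W1'/blk_W1'. Qed.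

Lemma blk_W2 t : blk i t \in W2.
Proof.
set a' := blk i (g i (vbar i + t) + g i (vbar i)).
have := parmapV_addr_LAspace (x := vbar) (a' := a').
rewrite LAspace'E /LAspace (negbTE vbarU) => /(_ (blk_W1' _)).
congr (_ \in W2); apply/ffunP => k; rewrite !ffunE; case: eqP => [->|_].
  by rewrite addrCA addrr_F2 addr0 permK addrC addKr_F2.
by rewrite addr0 permK addrr_F2.
Qed.

End FullBlocks.

Local Notation I := (blk_support W1).

Lemma blk_support_full i t : i \in I -> [/\ blk i t \in W1, blk i t \in W2 & blk i t \in W1'].
Proof.
rewrite inE => /existsP [a /andP [aW ai0]].
have aW0 : a \in LAsp 0 by rewrite /LAspace mem0v.
by split; [exact: (blk_W1 aW0 ai0 t) | exact: (blk_W2 aW0 ai0 t) | exact: (blk_W1' aW0 ai0 t)].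
Qed.

Lemma W1_wall y : (y \in W1) = (y \in wall_set m I).
Proof.
have W1I i t : i \in I -> blk i t \in W1 by case/(blk_support_full t).
exact: mem_wall_support W1I y.
Qed.

Lemma W2_wall y : (y \in W2) = (y \in wall_set m I).
Proof.
apply/idP/idP => [yW|]; last by apply: wall_set_subv => i t /(blk_support_full t) [].
rewrite inE; apply/forallP => i; apply/implyP => iI; apply: contraNT iI => yi.
have yW' : y \in LAsp vbar by rewrite /LAspace (negbTE vbarU).
by rewrite inE; apply/existsP; exists (blk i (y i)); rewrite (blk_W1 yW' yi) ffunE eqxx.
Qed.

Lemma W1'_wall y : (y \in W1') = (y \in wall_set m I).
Proof.
have -> : (y \in W1') = (gamV y \in W1).
  by apply/idP/idP => [/parmapV_W1' // | /parmap_W1]; rewrite parmapVK.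
by rewrite W1_wall -(parmap_wall_set g0) parmapVK.
Qed.

Lemma blk_support_neq0 : ~ trivial_part (LApart U' W1' W2' vbar') -> I != set0.
Proof.
move=> LA'_nontriv; apply/negP => /eqP I0; apply: LA'_nontriv.
have W1'0 : W1' = 0%VS by apply/vspaceP => y; rewrite W1'_wall I0 wall_set0 memv0.
by apply: LApart_trivial => //; rewrite -W1'_eq_W2'.
Qed.

Lemma blk_support_neqT : I != setT.
Proof.
apply: contraNneq vbarU => IT; apply: (subvP W1U).
by rewrite W1_wall IT inE; apply/forallP => i; rewrite in_setT.
Qed.

Lemma LA_spaces_wall : ~ trivial_part (LApart U' W1' W2' vbar') ->
  exists2 I : {set 'I_b}, I != set0 /\ I != setT & forall y,
    [/\ (y \in W1) = (y \in wall_set m I), (y \in W2) = (y \in wall_set m I),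
        (y \in W1') = (y \in wall_set m I) & (y \in W2') = (y \in wall_set m I)].
Proof.
move=> LA'_nontriv; exists I; first by split; [exact: blk_support_neq0 | exact: blk_support_neqT].
by move=> y; rewrite -W1'_eq_W2' W1_wall W2_wall W1'_wall.
Qed.

End ParallelLA.

Theorem lemma3p17 (b m : nat) (g : 'I_b -> {perm 'rV['F_2]_m})
  (U W1 W2 U' W1' W2' : {vspace Vsp b m}) (vbar vbar' : Vsp b m) :
  (1 < b)%N -> (4 <= m)%N ->
  parmap g 0 = 0 ->
  (forall i, diff_delta_uniform (fun x => g i x) 4) ->
  (forall i, nhat (fun x => g i x) = 0%N) ->
  \dim U = (m * b).-1 -> (W1 <= U)%VS -> (W2 <= U)%VS -> vbar \notin U ->
  \dim U' = (m * b).-1 -> (W1' <= U')%VS -> (W2' <= U')%VS -> vbar' \notin U' ->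
  Jset U :&: Jset U' = set0 ->
  ~ trivial_part (LApart U' W1' W2' vbar') ->
  maps_onto (parmap g) (LApart U W1 W2 vbar) (LApart U' W1' W2' vbar') ->
  [/\ [/\ is_wall W1, is_wall W2, is_wall W1' & is_wall W2'],
      [/\ W1 = W1', W1 = W2 & W1 = W2'],
      LApart U W1 W2 vbar = linpart W1 &
      LApart U' W1' W2' vbar' = linpart W1'].
Proof.
move=> _ m_ge4 g0 g_du g_nhat dimU W1U W2U vbarU dimU' W1U' W2U' vbarU' JUU' LA'_nontriv g_LA.
have [I [I0 IT] memW] := LA_spaces_wall m_ge4 g0 g_du g_nhat dimU W1U W2U vbarU
  dimU' W1U' W2U' vbarU' JUU' g_LA LA'_nontriv.
have wallW (W : {vspace Vsp b m}) : (forall y, (y \in W) = (y \in wall_set m I)) -> is_wall W.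
  by move=> memW'; exists I; split => //; apply/setP => y; rewrite inE memW'.
have [W11' W12 W12'] : [/\ W1 = W1', W1 = W2 & W1 = W2'].
  by split; apply/vspaceP => y; case: (memW y) => e1 e2 e1' e2'; rewrite e1 ?e2 ?e1' ?e2'.
split.
- by split; apply: wallW => y; case: (memW y).
- by [].
- exact: LApart_linpart dimU vbarU W12.
- by apply: LApart_linpart dimU' vbarU' _; rewrite -W11'.
Qed.
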